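(* Suppose that a string $S$ with $|S| \le |Q_k|+4\tau$ contains $Q_k$ as a substring. Then (a) replacing any occurrence of $Q_k$ in $S$ with $Q_k'$ results in $r_k(S)$; (b) replacing any occurrence of $Q'_k$ in $r_k(S)$ with $Q_k$ results in $S$.
   Context: For a string $S$, $S[1..p]$ is a period of $S$ if $S[i]=S[i+p]$ for $1\le i\le |S|-p$, and $\mathrm{per}(S)$ denotes the length of the shortest period of $S$. Let $\tau\ge1$ and $\ell>10\tau$ be integers, $S_k$ a string of length at least $\ell$, and $Q_k = S_k[1+2\tau..\ell]$, so $|Q_k|=\ell-2\tau\ge 8\tau$. Let $\rho=Q_k[1..\mathrm{per}(Q_k)]$. If $\mathrm{per}(Q_k) > 4\tau$, define $Q_k' = \#$, where $\#$ is a special letter not in the main alphabet. Otherwise write $Q_k=\rho^t\rho'$ with $\rho'$ a prefix of $\rho$, and set $Q_k'=\rho^{t'}\rho'$ for some $t'\le t$ chosen so that $8\tau\le |Q_k'|<12\tau$. For any string $S$, define $r_k(S)=\varepsilon$ (the empty string) if $S$ does not contain $Q_k$, and otherwise $r_k(S)$ is the string obtained from $S$ by replacing the first occurrence of $Q_k$ with $Q'_k$. *)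

From mathcomp Require Import all_boot.
Set Implicit Arguments. Unset Strict Implicit. Unset Printing Implicit Defensive.

(* Strings that may contain the
   special letter # (not in A) are [seq (option A)], with # = None and the
   main letters embedded by Some.  Positions are 0-indexed internally. *)

Section Strings.
Variable A : eqType.

Definition is_period (S : seq A) (p : nat) : bool :=
  [&& 0 < p, p <= size S &
      all (fun i => onth S i == onth S (i + p)) (iota 0 (size S - p))].

(* length of the shortest period (defaults to |S|+1 only if S is empty) *)
Definition per (S : seq A) : nat :=
  head (size S).+1 [seq p <- iota 1 (size S) | is_period S p].

(* Q_k = S_k[1+2tau .. l] (1-indexed, inclusive) *)
Definition Qk (tau l : nat) (Sk : seq A) : seq A := drop (2 * tau) (take l Sk).

(* Q'_k is any string satisfying the paper's specification (the choice of t'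
   is free, subject to 8 tau <= |Q'_k| < 12 tau). *)
Definition Qprime_spec (tau : nat) (Q : seq A) (Q' : seq (option A)) : Prop :=
  (4 * tau < per Q /\ Q' = [:: None]) \/
  (per Q <= 4 * tau /\
   exists (t t' : nat) (rho' : seq A),
     let rho := take (per Q) Q in
     [/\ Q = flatten (nseq t rho) ++ rho', prefix rho' rho, t' <= t,
         Q' = map Some (flatten (nseq t' rho) ++ rho') &
         8 * tau <= size Q' < 12 * tau]).

(* r_k(S): empty if S does not contain Q, else replace first occurrence of Q by Q' *)
Definition rk (Q : seq A) (Q' : seq (option A)) (S : seq A) : seq (option A) :=
  if infix Q S then
    let i := infix_index Q S in
    map Some (take i S) ++ Q' ++ map Some (drop (i + size Q) S)
  else [::].

End Strings.

From mathcomp Require Import all_boot zify.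
Set Implicit Arguments. Unset Strict Implicit. Unset Printing Implicit Defensive.

(* Write S = x Q y for the first occurrence of Q.  Any other
   occurrence S = u Q v is shifted from this one by d <= 4 tau, and d is then a
   period of Q.  If per Q > 4 tau this forces d = 0, and in r_k(S) the letter #
   marks the unique place of Q'.  Otherwise let p = per Q and Q = rho^t rho'.
   A period d with d + p <= |Q| is a multiple of p, by the Fine-Wilf theorem
   and the minimality of p, so the two occurrences differ by whole copies of
   rho; such a shift survives replacing rho^t rho' by rho^t' rho', and back,
   because Q' = rho^t' rho' is again a prefix of Q of length >= 8 tau. *)

Section Periods.
Variable A : eqType.
Implicit Types (X x y u v z : seq A) (p q d : nat).

Definition has_period X q :=
  forall i, i + q < size X -> onth X i = onth X (i + q).

Lemma is_periodP X q :
  is_period X q <-> [/\ 0 < q, q <= size X & has_period X q].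
Proof.
rewrite /is_period; split.
- case/and3P=> q0 qX /allP hall; split=> // i hi.
  by apply/eqP/hall; rewrite mem_iota; lia.
- case=> q0 qX hq; rewrite q0 qX; apply/allP=> i; rewrite mem_iota => hi.
  by apply/eqP/hq; lia.
Qed.

Lemma per_gt0 X : 0 < per X.
Proof.
rewrite /per; case E: [seq _ <- _ | _] => [|h s] //=.
have : h \in [seq p <- iota 1 (size X) | is_period X p] by rewrite E mem_head.
by rewrite mem_filter mem_iota => /and3P[].
Qed.

Lemma per_spec X : 0 < size X -> per X <= size X /\ has_period X (per X).
Proof.
move=> X0.
have sX : size X \in [seq p <- iota 1 (size X) | is_period X p].
  rewrite mem_filter mem_iota; apply/andP; split; last by lia.
  by apply/is_periodP; split=> // i; lia.
have : per X \in [seq p <- iota 1 (size X) | is_period X p].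
  by move: sX; rewrite /per; case: [seq _ <- _ | _] => // h s _; apply: mem_head.
by rewrite mem_filter => /andP[/is_periodP[]].
Qed.

Lemma per_le X q : 0 < q -> q <= size X -> has_period X q -> per X <= q.
Proof.
move=> q0 qX hq.
have : q \in [seq p <- iota 1 (size X) | is_period X p].
  by rewrite mem_filter mem_iota; apply/andP; split; [apply/is_periodP | lia].
have := sorted_filter leq_trans (is_period X) (iota_sorted 1 (size X)).
rewrite /per; case: [seq _ <- _ | _] => // h s /= /(order_path_min leq_trans).
by move=> /allP hs; rewrite inE => /predU1P[-> // | /hs].
Qed.

Lemma has_period_mul X p k i :
  has_period X p -> i + k * p < size X -> onth X i = onth X (i + k * p).
Proof.
move=> hp; elim: k => [|k IH] hk; first by rewrite addn0.
rewrite IH; last by lia.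
by rewrite hp; [congr onth | ]; lia.
Qed.

Lemma has_period_subn X p q : p <= q -> p + q <= size X ->
  has_period X p -> has_period X q -> has_period X (q - p).
Proof.
move=> le_pq hs hp hq i hi.
case: (ltnP (i + q) (size X)) => hiq.
  by rewrite (hq i hiq) (hp (i + (q - p))); [congr onth | ]; lia.
have e1 : onth X (i - p) = onth X i by rewrite hp ?subnK //; lia.
have e2 : onth X (i - p) = onth X (i + (q - p)) by rewrite hq; [congr onth | ]; lia.
by rewrite -e1 e2.
Qed.

Lemma has_period_gcdn X p q : 0 < p -> 0 < q -> p + q <= size X ->
  has_period X p -> has_period X q -> has_period X (gcdn p q).
Proof.
have [n] := ubnP (p + q); elim: n p q => // n IH p q lt_n p0 q0 hs hp hq.
wlog le_pq : p q lt_n p0 q0 hs hp hq / p <= q.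
  move=> W; case: (leqP p q) => [|/ltnW] h; first exact: W.
  by rewrite gcdnC; apply: W => //; lia.
have [<-|ne_pq] := eqVneq p q; first by rewrite gcdnn.
have lt_pq : p < q by rewrite ltn_neqAle ne_pq.
rewrite -(subnK le_pq) gcdnDr.
by apply: IH (has_period_subn le_pq hs hp hq) => //; lia.
Qed.

Lemma has_period_prefix X z p : has_period (X ++ z) p -> has_period X p.
Proof.
move=> hp i hi; have i_lt : i < size X by lia.
by have := hp i; rewrite size_cat !onth_cat i_lt hi; apply; lia.
Qed.

Lemma has_period_cat X z p g : 0 < p -> p + g <= size X ->
  has_period (X ++ z) p -> has_period X g -> has_period (X ++ z) g.
Proof.
move=> p0 hs hp hg i hi.
have r_lt : i %% p < p by rewrite ltn_mod.
have iE : i = i %% p + i %/ p * p by rewrite addnC -divn_eq.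
have ig : i + g = (i %% p + g) + i %/ p * p by lia.
rewrite {1}iE ig -(has_period_mul hp) -?(has_period_mul hp); try lia.
have r1 : i %% p < size X by lia.
have r2 : i %% p + g < size X by lia.
by rewrite !onth_cat r1 r2; apply: hg.
Qed.

Lemma per_dvdn X z d : 0 < d -> per (X ++ z) + d <= size X ->
  has_period X d -> per (X ++ z) %| d.
Proof.
move=> d0 hs hd.
have p0 := per_gt0 (X ++ z).
have [_ hp] := per_spec (X := X ++ z) ltac:(rewrite size_cat; lia).
set p := per _ in hs p0 hp *.
have g_le : gcdn p d <= p by apply: dvdn_leq p0 (dvdn_gcdl _ _).
have g_le' : gcdn p d <= d by apply: dvdn_leq d0 (dvdn_gcdr _ _).
have hg : has_period (X ++ z) (gcdn p d).
  apply: (has_period_cat p0 _ hp); first by lia.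
  by apply: (has_period_gcdn _ _ _ (has_period_prefix hp) hd) => //; lia.
have : p <= gcdn p d.
  by apply: per_le hg; rewrite ?gcdn_gt0 ?p0 ?size_cat //; lia.
by move=> h; apply/gcdn_idPl/eqP; rewrite eqn_leq g_le h.
Qed.

Lemma onth_cat_mid x X y i :
  i < size X -> onth (x ++ X ++ y) (size x + i) = onth X i.
Proof. by move=> hi; rewrite onth_cat ltnNge leq_addr addKn onth_cat hi. Qed.

Lemma occurrence_offset_period x X y u v :
  x ++ X ++ y = u ++ X ++ v -> size x <= size u ->
  has_period X (size u - size x).
Proof.
move=> E le_xu i hi.
have hu : onth X i = onth (u ++ X ++ v) (size u + i).
  by rewrite onth_cat_mid //; lia.
by rewrite hu -(onth_cat_mid x y hi) E; congr onth; lia.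
Qed.

Lemma occurrence_prefix x X y u v :
  x ++ X ++ y = u ++ X ++ v -> size x <= size u <= size x + size X ->
  u = x ++ take (size u - size x) X.
Proof.
move=> E /andP[le_xu le_uX].
have hu := congr1 (take (size u)) E; rewrite [RHS]take_size_cat // in hu.
by rewrite -{1}hu take_cat ltnNge le_xu /= takel_cat //; lia.
Qed.

Lemma occurrence_eq x X y u v :
  size x = size u -> x ++ X ++ y = u ++ X ++ v -> x = u /\ y = v.
Proof.
move=> hs /eqP; rewrite eqseq_cat // => /andP[/eqP-> /eqP/eqP].
by rewrite eqseq_cat // => /andP[_ /eqP->].
Qed.

Lemma occurrence_unique x X y u v :
  size x + size y < per X -> x ++ X ++ y = u ++ X ++ v -> x = u /\ y = v.
Proof.
move=> hs E.
have sE : size x + size y = size u + size v.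
  by move/(congr1 size): E; rewrite !size_cat; lia.
wlog le_xu : x y u v hs E sE / size x <= size u.
  move=> W; case: (leqP (size x) (size u)) => h; first exact: W.
  by have [-> ->] := W u v x y ltac:(lia) (esym E) (esym sE) (ltnW h).
case: (posnP (size u - size x)) => d0; first by apply: occurrence_eq E; lia.
case: (posnP (size X)) => [/size0nil X0 | X0].
  by move: hs; rewrite X0 /per /=; lia.
have [pX _] := per_spec X0.
have := per_le d0 _ (occurrence_offset_period E le_xu); lia.
Qed.

End Periods.

Section Powers.
Variable A : eqType.
Implicit Types (r s x y u v : seq A) (m n : nat).

Lemma size_flatten_nseq r n : size (flatten (nseq n r)) = n * size r.
Proof. by elim: n => //= n IH; rewrite size_cat IH mulSn. Qed.

Lemma flatten_nseqD r m n :
  flatten (nseq (m + n) r) = flatten (nseq m r) ++ flatten (nseq n r).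
Proof. by rewrite nseqD flatten_cat. Qed.

Lemma flatten_nseqC r m n :
  flatten (nseq m r) ++ flatten (nseq n r) = flatten (nseq n r) ++ flatten (nseq m r).
Proof. by rewrite -!flatten_nseqD addnC. Qed.

Lemma take_flatten_nseq r s m n :
  m <= n -> take (m * size r) (flatten (nseq n r) ++ s) = flatten (nseq m r).
Proof.
move=> le_mn; rewrite -(subnKC le_mn) flatten_nseqD -catA.
by rewrite take_size_cat // size_flatten_nseq.
Qed.

Lemma prefix_flatten_nseq r r' m n : prefix r' r -> m <= n ->
  prefix (flatten (nseq m r) ++ r') (flatten (nseq n r) ++ r').
Proof.
move=> hr le_mn; rewrite -(subnKC le_mn) flatten_nseqD -catA.
elim: (flatten (nseq m r)) => [|c s IH] /=; last by rewrite eqxx.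
by case: (n - m) => [|k] /=; [apply: prefix_refl | rewrite -catA prefix_catl].
Qed.

Lemma occurrence_shift_pow r r' x y v a b k :
  x ++ (flatten (nseq a r) ++ r') ++ y =
    (x ++ flatten (nseq k r)) ++ (flatten (nseq a r) ++ r') ++ v ->
  x ++ (flatten (nseq b r) ++ r') ++ y =
    (x ++ flatten (nseq k r)) ++ (flatten (nseq b r) ++ r') ++ v.
Proof.
have commute n : flatten (nseq k r) ++ flatten (nseq n r) ++ r' ++ v =
    flatten (nseq n r) ++ flatten (nseq k r) ++ r' ++ v.
  by rewrite catA flatten_nseqC -catA.
rewrite -!catA commute => /eqP; rewrite eqseq_cat // => /andP[_].
rewrite eqseq_cat // => /andP[_ /eqP hy].
by rewrite commute hy.
Qed.

End Powers.

Section PeriodicOccurrences.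
Variables (A : eqType) (Q r' : seq A) (a : nat).
Let rho := take (per Q) Q.
Let X := flatten (nseq a rho) ++ r'.
Hypotheses (r'_prefix : prefix r' rho) (X_prefix : prefix X Q).

Lemma periodic_occurrence_shift x y u v b :
  size x + size y + per Q <= size X -> x ++ X ++ y = u ++ X ++ v ->
  size x <= size u ->
  x ++ (flatten (nseq b rho) ++ r') ++ y = u ++ (flatten (nseq b rho) ++ r') ++ v.
Proof.
move=> hs E le_xu.
have sE : size x + size y = size u + size v.
  by move/(congr1 size): E; rewrite !size_cat; lia.
have [z hQ] := prefixP X_prefix.
have p0 := per_gt0 Q.
have [pQ _] := per_spec (X := Q) ltac:(rewrite hQ size_cat; lia).
have size_rho : size rho = per Q by rewrite size_takel.
have size_X : size X = a * per Q + size r'.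
  by rewrite size_cat size_flatten_nseq size_rho.
have size_r' : size r' <= per Q by rewrite -size_rho size_prefix.
set d := size u - size x.
have p_dvd_d : per Q %| d.
  have [->|d0] := posnP d; first exact: dvdn0.
  by rewrite hQ; apply: per_dvdn d0 _ (occurrence_offset_period E le_xu); rewrite -hQ; lia.
set k := d %/ per Q.
have dE : d = k * per Q by rewrite divnK.
have le_ka : k <= a by rewrite -(leq_pmul2r p0); lia.
have hu : u = x ++ flatten (nseq k rho).
  by rewrite (occurrence_prefix E) -/d ?dE -?size_rho ?take_flatten_nseq //; lia.
by rewrite hu in E *; apply: occurrence_shift_pow E.
Qed.

Lemma periodic_occurrences_eq x y u v b :
  size x + size y + per Q <= size X -> x ++ X ++ y = u ++ X ++ v ->
  x ++ (flatten (nseq b rho) ++ r') ++ y = u ++ (flatten (nseq b rho) ++ r') ++ v.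
Proof.
move=> hs E.
have sE : size x + size y = size u + size v.
  by move/(congr1 size): E; rewrite !size_cat; lia.
case: (leqP (size x) (size u)) => h; first exact: periodic_occurrence_shift.
by apply/esym/periodic_occurrence_shift; [lia | exact/esym | exact/ltnW].
Qed.

End PeriodicOccurrences.

Lemma cat_cons_notin (T : eqType) (c : T) (a b u v : seq T) :
  c \notin a -> c \notin b -> a ++ c :: b = u ++ c :: v -> a = u /\ b = v.
Proof.
move=> ca cb E.
have cu : c \notin u.
  apply/count_memPn; move/(congr1 (count_mem c)): E.
  by rewrite !count_cat /= eqxx (count_memPn ca) (count_memPn cb); lia.
have hs : size a = size u.
  by move/(congr1 (index c)): E; rewrite !index_cat (negbTE ca) (negbTE cu) /= eqxx !addn0.
by move/eqP: E; rewrite eqseq_cat // eqseq_cons eqxx => /andP[/eqP-> /eqP->].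
Qed.

Lemma map_eq_cat3 (T1 T2 : Type) (f : T1 -> T2) (w m : seq T1) (u v : seq T2) :
  injective f -> map f w = u ++ map f m ++ v ->
  exists u0 v0, [/\ u = map f u0, v = map f v0 & w = u0 ++ m ++ v0].
Proof.
move=> f_inj E; exists (take (size u) w), (drop (size u + size m) w).
have hu : u = map f (take (size u) w) by rewrite map_take E take_size_cat.
have hv : v = map f (drop (size u + size m) w).
  by rewrite map_drop E addnC -drop_drop !drop_size_cat ?size_map.
by split=> //; apply: (inj_map f_inj); rewrite !map_cat -hu -hv.
Qed.

Lemma rk_infix (A : eqType) (Q S : seq A) (Q' : seq (option A)) : infix Q S ->
  exists x y, S = x ++ Q ++ y /\ rk Q Q' S = map Some x ++ Q' ++ map Some y.
Proof.
move=> hinf; rewrite /rk hinf; set i := infix_index Q S.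
exists (take i S), (drop (i + size Q) S); split=> //.
move: hinf; rewrite infixE -/i => /eqP hQ.
rewrite -{1}(cat_take_drop i S) -{1}(cat_take_drop (size Q) (drop i S)) hQ.
by rewrite drop_drop addnC.
Qed.

Theorem fact1 (A : eqType) (tau l : nat) (Sk : seq A) (Q' : seq (option A))
    (S : seq A) :
  1 <= tau -> 10 * tau < l -> l <= size Sk ->
  Qprime_spec tau (Qk tau l Sk) Q' ->
  size S <= size (Qk tau l Sk) + 4 * tau ->
  infix (Qk tau l Sk) S ->
  (forall u v : seq A, S = u ++ Qk tau l Sk ++ v ->
     map Some u ++ Q' ++ map Some v = rk (Qk tau l Sk) Q' S) /\
  (forall u v : seq (option A), rk (Qk tau l Sk) Q' S = u ++ Q' ++ v ->
     u ++ map Some (Qk tau l Sk) ++ v = map Some S).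
Proof.
move=> tau_gt0 l_gt lSk hspec hS hinf.
have size_Q : size (Qk tau l Sk) = l - 2 * tau by rewrite /Qk size_drop size_takel.
set Q := Qk tau l Sk in hspec hS hinf size_Q *.
have [x [y [hSxy ->]]] := rk_infix Q' hinf.
have slack s t : S = s ++ Q ++ t -> size s + size t <= 4 * tau.
  by move=> hst; move: hS; rewrite hst !size_cat; lia.
have None_notin s : None \notin map (@Some A) s by apply/mapP; case.
case: hspec => [[hp ->] | [hp [t [t' [r' [hQ r'_prefix le_t't hQ' size_Q']]]]]].
  split=> [u v huv | u v E].
    have hs : size x + size y < per Q by have := slack _ _ hSxy; lia.
    by have [-> ->] := occurrence_unique hs (etrans (esym hSxy) huv).
  have [<- <-] := cat_cons_notin (None_notin x) (None_notin y) E.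
  by rewrite hSxy !map_cat.
set rho := take (per Q) Q in hQ r'_prefix hQ'.
split=> [u v huv | u v].
  rewrite hQ' -!map_cat; congr map.
  apply: (periodic_occurrences_eq (a := t)); rewrite -/rho -?hQ ?prefix_refl //.
    by have := slack _ _ huv; lia.
  by rewrite -huv -hSxy.
rewrite hQ' -!map_cat => /(map_eq_cat3 Some_inj) [u0 [v0 [-> -> E]]].
rewrite hSxy -!map_cat; congr map.
have Q''_prefix : prefix (flatten (nseq t' rho) ++ r') Q.
  by rewrite {1}hQ prefix_flatten_nseq.
rewrite hQ; apply/esym/(periodic_occurrences_eq (a := t')); rewrite -/rho //.
by move: size_Q'; rewrite hQ' size_map; have := slack _ _ hSxy; lia.
Qed.
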